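(* Let $(P_n)_{n\ge 0}$ be the Padovan sequence and for $1\le b\le 4$ and $m\ge 0$ let $r_m^{(4,b)}=\sum_{k=0}^{m}P_{4k+b}$. Then for every $m\ge 3$, $$r_m^{(4,b)}=2r_{m-1}^{(4,b)}+3r_{m-2}^{(4,b)}+r_{m-3}^{(4,b)}+c_b,$$ where $c_1=2$, $c_2=4$, $c_3=3$, $c_4=6$.
   Context: The Padovan sequence is defined by $P_0=P_1=P_2=1$ and $P_{n+3}=P_{n+1}+P_n$. *)

From mathcomp Require Import all_boot.
Set Implicit Arguments.
Unset Strict Implicit.
Unset Printing Implicit Defensive.

Fixpoint padovan (n : nat) : nat :=
  match n with
  | 0 | 1 | 2 => 1
  | (k.+1 as j).+2 => padovan j + padovan k
  end.

Definition r4 (b m : nat) : nat := \sum_(0 <= k < m.+1) padovan (4 * k + b).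

Definition cb (b : nat) : nat :=
  match b with 1 => 2 | 2 => 4 | 3 => 3 | 4 => 6 | _ => 0 end.

(* Modulo the characteristic polynomial x^3 - x - 1 of the Padovan
   recurrence, x^12 = 2 x^8 + 3 x^4 + 1; hence every subsequence
   k |-> P_(4k+b) satisfies a_(k+3) = 2 a_(k+2) + 3 a_(k+1) + a_k.
   Partial sums of a sequence obeying this recurrence obey it too, up to an
   additive constant, which is read off at m = 3. *)
From mathcomp Require Import all_boot.
From mathcomp Require Import zify.

Lemma padovanS n : padovan n.+3 = padovan n.+1 + padovan n.
Proof. by []. Qed.

Lemma padovan_step4 n :
  padovan (n + 12) = 2 * padovan (n + 8) + 3 * padovan (n + 4) + padovan n.
Proof. rewrite !addnS addn0 !padovanS; lia. Qed.

Definition psum (a : nat -> nat) (n : nat) : nat := \sum_(0 <= k < n.+1) a k.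

Lemma psumS a n : psum a n.+1 = psum a n + a n.+1.
Proof. by rewrite /psum big_nat_recr. Qed.

Lemma psum_rec (a : nat -> nat) (c : nat) :
  (forall k, a k.+3 = 2 * a k.+2 + 3 * a k.+1 + a k) ->
  psum a 3 = 2 * psum a 2 + 3 * psum a 1 + psum a 0 + c ->
  forall n, psum a n.+3 = 2 * psum a n.+2 + 3 * psum a n.+1 + psum a n + c.
Proof.
move=> a_rec base; elim=> [//|n IHn].
have := a_rec n.+1; move: IHn; rewrite !psumS; lia.
Qed.

Lemma padovan_step4_rec b k :
  padovan (4 * k.+3 + b)
  = 2 * padovan (4 * k.+2 + b) + 3 * padovan (4 * k.+1 + b) + padovan (4 * k + b).
Proof.
have shift i : 4 * (k + i) + b = (4 * k + b) + 4 * i by lia.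
by rewrite -(addn3 k) -(addn2 k) -(addn1 k) !shift padovan_step4.
Qed.

Theorem theorem4p4 (b m : nat) : 1 <= b <= 4 -> 3 <= m ->
  r4 b m = 2 * r4 b (m - 1) + 3 * r4 b (m - 2) + r4 b (m - 3) + cb b.
Proof.
move=> b_range m_ge3.
have [n ->] : exists n, m = n.+3 by exists (m - 3); lia.
rewrite !subSS !subn0.
apply: (psum_rec (fun k => padovan (4 * k + b))) => [k|].
  exact: padovan_step4_rec.
by case: b b_range => [|[|[|[|[|b]]]]] //= _; rewrite /psum unlock.
Qed.
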